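(* Let $A$ be the adjacency matrix of a graph $G=(V,E)$ on $p$ vertices and let $d$ be the maximum vertex degree in $G$. Then $\gamma_{pd}=pd\cdot\delta+S_A$ is entanglement breaking. In particular, $t_{eb}\le pd$.
   Context: $A=(a_{i,j})$ is a self-adjoint $p\times p$ matrix with entries in $\{0,1\}$ and zero diagonal; $G$ is the simple graph with $(i,j)$ an edge iff $a_{i,j}=1$. $S_A: M_p\to M_p$ is the Schur product map $S_A(B)=(a_{i,j}b_{i,j})$. $tr(X)=\frac1p\mathrm{Tr}(X)$, $\delta(X)=tr(X)I_p$, and $\gamma_t=t\delta+S_A$ for real $t$. A map $\phi: M_p\to M_p$ is entanglement breaking if it can be written as $\phi(X)=\sum_k v_k w_k^*Xw_kv_k^*$ for finitely many vectors $w_k,v_k\in\mathbb{C}^p$. $t_{eb}=\min\{t:\gamma_t\text{ is entanglement breaking}\}$. *)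

(* Complex scalars: an arbitrary numClosedFieldType C
   (e.g. the complex numbers). *)
From HB Require Import structures.
From mathcomp Require Import all_boot all_order all_algebra.
Set Implicit Arguments. Unset Strict Implicit. Unset Printing Implicit Defensive.
Import Order.TTheory GRing.Theory Num.Theory.
Local Open Scope ring_scope.

Definition adjmx (C : numClosedFieldType) m n (M : 'M[C]_(m, n)) : 'M[C]_(n, m) :=
  (map_mx Num.conj M)^T.

Definition ntr (C : numClosedFieldType) p (X : 'M[C]_p) : C := \tr X / p%:R.

Definition deltamap (C : numClosedFieldType) p (X : 'M[C]_p) : 'M[C]_p :=
  (ntr X)%:M.

Definition schur (C : numClosedFieldType) p (A B : 'M[C]_p) : 'M[C]_p :=
  \matrix_(i, j) (A i j * B i j).

Definition gammamap (C : numClosedFieldType) p (A : 'M[C]_p) (t : C)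
  (X : 'M[C]_p) : 'M[C]_p := t *: deltamap X + schur A X.

Definition entanglement_breaking (C : numClosedFieldType) p
  (phi : 'M[C]_p -> 'M[C]_p) : Prop :=
  exists (n : nat) (v w : 'I_n -> 'cV[C]_p),
    forall X : 'M[C]_p,
      phi X = \sum_(k < n) (v k *m adjmx (w k) *m X *m w k *m adjmx (v k)).

Definition adjacency_matrix (C : numClosedFieldType) p (A : 'M[C]_p) : Prop :=
  [/\ forall i j, A i j = 0 \/ A i j = 1, adjmx A = A & forall i, A i i = 0].

Definition vdegree (C : numClosedFieldType) p (A : 'M[C]_p) (i : 'I_p) : nat :=
  #|[set j | A i j == 1]|.

Definition maxdegree (C : numClosedFieldType) p (A : 'M[C]_p) : nat :=
  \max_(i < p) vdegree A i.

From HB Require Import structures.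
From mathcomp Require Import all_boot all_order all_algebra.
From mathcomp Require Import ring.

(* Write E_ab for the matrix units and e_a for the standard basis vectors.
   For an edge {a, b}, summing the maps X |-> (u^* X u) u u^* over
   u = e_a + z e_b, z in {1, i, -1, -i}, gives
     4 ((X_aa + X_bb) (E_aa + E_bb) + X_ab E_ab + X_ba E_ba),
   the phases cancelling the cross terms X_ab E_ba.  Summing these with weight
   1/8 over the ordered pairs of adjacent vertices yields S_A(X) plus the
   diagonal matrix with entries deg(a) X_aa + sum_(b ~ a) X_bb.  Since
   deg(a) <= d, what is missing to reach pd δ(X) = d Tr(X) I is a nonnegative
   combination of the maps X |-> X_bb E_aa = e_a e_b^* X e_b e_a^*.  All these
   maps are entanglement breaking, and entanglement breaking maps form a convex
   cone. *)
Set Implicit Arguments. Unset Strict Implicit. Unset Printing Implicit Defensive.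
Import Order.TTheory GRing.Theory Num.Theory.
Local Open Scope ring_scope.

Section EntanglementBreaking.
Variables (C : numClosedFieldType) (p : nat).
Implicit Types (v w : 'cV[C]_p) (X : 'M[C]_p) (f g : 'M[C]_p -> 'M[C]_p).

Lemma adjmxD m n (M N : 'M[C]_(m, n)) : adjmx (M + N) = adjmx M + adjmx N.
Proof. by rewrite /adjmx map_mxD linearD. Qed.

Lemma adjmxZ m n a (M : 'M[C]_(m, n)) : adjmx (a *: M) = a^* *: adjmx M.
Proof. by rewrite /adjmx map_mxZ linearZ. Qed.

Lemma adjmx_delta m n i j : adjmx (delta_mx i j : 'M[C]_(m, n)) = delta_mx j i.
Proof. by rewrite /adjmx map_delta_mx trmx_delta. Qed.

Definition rank_one_map v w X := v *m adjmx w *m X *m w *m adjmx v.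

Lemma rank_one_mapE v w X :
  rank_one_map v w X = (adjmx w *m X *m w) 0 0 *: (v *m adjmx v).
Proof.
rewrite /rank_one_map.
have -> : v *m adjmx w *m X *m w = v *m (adjmx w *m X *m w) by rewrite !mulmxA.
by rewrite {1}[adjmx w *m X *m w]mx11_scalar mul_mx_scalar -scalemxAl.
Qed.

Lemma eb_ext f g : f =1 g -> entanglement_breaking f -> entanglement_breaking g.
Proof. by move=> fg [n [v [w fE]]]; exists n, v, w => X; rewrite -fg. Qed.

Lemma eb_rank_one v w : entanglement_breaking (rank_one_map v w).
Proof. by exists 1%N, (fun=> v), (fun=> w) => X; rewrite big_ord1. Qed.

Lemma eb0 : entanglement_breaking (fun=> 0 : 'M[C]_p).
Proof. by exists 0%N, (fun=> 0), (fun=> 0) => X; rewrite big_ord0. Qed.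

Lemma ebD f g : entanglement_breaking f -> entanglement_breaking g ->
  entanglement_breaking (fun X => f X + g X).
Proof.
move=> [n [v [w fE]]] [m [v' [w' gE]]].
pose glue (T : Type) (a : 'I_n -> T) (b : 'I_m -> T) k :=
  match split k with inl i => a i | inr j => b j end.
exists (n + m)%N, (glue _ v v'), (glue _ w w') => X.
rewrite big_split_ord fE gE /glue; congr (_ + _); apply: eq_bigr => k _.
  by rewrite (unsplitK (inl k)).
by rewrite (unsplitK (inr k)).
Qed.

Lemma eb_sum (I : Type) (r : seq I) (F : I -> 'M[C]_p -> 'M[C]_p) :
  (forall i, entanglement_breaking (F i)) ->
  entanglement_breaking (fun X => \sum_(i <- r) F i X).
Proof.
move=> ebF; elim: r => [|i r IHr].
  by apply: eb_ext eb0 => X; rewrite big_nil.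
by apply: eb_ext (ebD (ebF i) IHr) => X; rewrite big_cons.
Qed.

Lemma ebZ (c : C) f : 0 <= c -> entanglement_breaking f ->
  entanglement_breaking (fun X => c *: f X).
Proof.
move=> c_ge0 [n [v [w fE]]]; exists n, v, (fun k => sqrtC c *: w k) => X.
rewrite fE scaler_sumr; apply: eq_bigr => k _.
rewrite adjmxZ -!(scalemxAl, scalemxAr) scalerA.
by rewrite geC0_conj ?sqrtC_ge0 // -expr2 sqrtCK.
Qed.

End EntanglementBreaking.

Section EdgeMaps.
Variables (C : numClosedFieldType) (p : nat).
Implicit Types (a b : 'I_p) (X : 'M[C]_p).

Definition edge_vec a b (z : C) : 'cV[C]_p := delta_mx a 0 + z *: delta_mx b 0.

Definition edge_map a b X :=
  \sum_(z <- [:: 1; 'i; -1; - 'i])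
    rank_one_map (edge_vec a b z) (edge_vec a b z) X.

Definition half_edge_mx X a b : 'M[C]_p :=
  (X a a + X b b) *: delta_mx a a + X a b *: delta_mx a b.

Lemma eb_edge_map a b : entanglement_breaking (edge_map a b).
Proof. exact: eb_sum (fun z => eb_rank_one _ _). Qed.

Lemma delta_mulmx_delta X a b :
  (delta_mx 0 a : 'rV[C]_p) *m X *m delta_mx b 0 = (X a b)%:M.
Proof. by rewrite [LHS]mx11_scalar -rowE -colE !mxE. Qed.

Lemma edge_mapE a b X :
  edge_map a b X = 4 *: (half_edge_mx X a b + half_edge_mx X b a).
Proof.
rewrite /edge_map !big_cons big_nil !rank_one_mapE /edge_vec !adjmxD !adjmxZ !adjmx_delta.
rewrite !(mulmxDl, mulmxDr) -!(scalemxAl, scalemxAr) !delta_mulmx_delta !mul_delta_mx.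
(* [(- 'i)^*] must go before [rmorphN], whose output conjugation is not
   syntactically [Num.conj], so that [conjCi] would not fire on it. *)
have conjNi : (- 'i)^* = 'i :> C by rewrite -conjCi conjCK.
rewrite conjNi conjCi rmorphN !rmorph1.
apply/matrixP => i j; rewrite !mxE /=.
ring: (mulCii C).
Qed.

Lemma rank_one_map_delta a b X :
  rank_one_map (delta_mx a 0) (delta_mx b 0) X = X b b *: delta_mx a a.
Proof.
by rewrite rank_one_mapE !adjmx_delta delta_mulmx_delta mul_delta_mx mxE eqxx mulr1n.
Qed.

End EdgeMaps.

Lemma sum_nat_eq_mul (R : pzSemiRingType) (I : finType) (i : I) (F : I -> R) :
  \sum_j (i == j)%:R * F j = F i.
Proof.
rewrite (bigD1 i) //= eqxx mul1r big1 ?addr0 // => j.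
by rewrite eq_sym => /negbTE ->; rewrite mul0r.
Qed.

Section Decomposition.
Variables (C : numClosedFieldType) (p : nat).
Implicit Types (A X : 'M[C]_p) (a b : 'I_p).

Lemma gammamap_dim_mulE A X (d : nat) :
  gammamap A (p * d)%:R X = (d%:R * \tr X)%:M + schur A X.
Proof.
rewrite /gammamap /deltamap /ntr scale_scalar_mx; apply/matrixP => i j.
have p_neq0 : p%:R != 0 :> C by rewrite pnatr_eq0 -lt0n (leq_ltn_trans _ (ltn_ord i)).
by rewrite !mxE natrM; congr (_ *+ _ + _); field.
Qed.

Lemma sum_edge_maps A X : (forall a b, A b a = A a b) ->
  \sum_a \sum_b (A a b / 8) *: edge_map a b X =
  schur A X + diag_mx (\row_a \sum_b A a b * (X a a + X b b)).
Proof.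
move=> symA.
have swap (F : 'I_p -> 'I_p -> 'M[C]_p) :
    \sum_a \sum_b (A a b / 2) *: F b a = \sum_a \sum_b (A a b / 2) *: F a b.
  by rewrite exchange_big; apply: eq_bigr => a _; apply: eq_bigr => b _; rewrite symA.
have split_edge a b : (A a b / 8) *: edge_map a b X =
    (A a b / 2) *: half_edge_mx X a b + (A a b / 2) *: half_edge_mx X b a.
  by rewrite edge_mapE scalerA scalerDr; congr (_ *: _ + _ *: _); field.
transitivity (\sum_a \sum_b A a b *: half_edge_mx X a b).
  under eq_bigr => a _ do rewrite (eq_bigr _ (fun b _ => split_edge a b)) big_split.
  rewrite big_split /= (swap (half_edge_mx X)) -big_split /=; apply: eq_bigr => a _.
  by rewrite -big_split; apply: eq_bigr => b _; rewrite /= -scalerDl -splitr.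
rewrite diag_mx_sum_delta [schur A X]matrix_sum_delta -big_split /=.
apply: eq_bigr => a _; rewrite mxE scaler_suml -big_split /=.
by apply: eq_bigr => b _; rewrite /half_edge_mx scalerDr !scalerA mxE addrC.
Qed.

Lemma sum_rank_one_delta X (w : 'I_p -> 'I_p -> C) :
  \sum_a \sum_b w a b *: rank_one_map (delta_mx a 0) (delta_mx b 0) X =
  diag_mx (\row_a \sum_b w a b * X b b).
Proof.
rewrite diag_mx_sum_delta; apply: eq_bigr => a _; rewrite mxE scaler_suml.
by apply: eq_bigr => b _; rewrite rank_one_map_delta scalerA.
Qed.

Definition fill_weight A (d : nat) a b : C :=
  d%:R - A a b - (a == b)%:R * \sum_c A a c.

Lemma edge_fill_diag_const A X (d : nat) :
  \row_a \sum_b A a b * (X a a + X b b) + \row_a \sum_b fill_weight A d a b * X b b =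
  const_mx (d%:R * \tr X).
Proof.
apply/rowP => a; rewrite !mxE -big_split /= /mxtrace mulr_sumr.
rewrite (eq_bigr (fun b => d%:R * X b b +
    (A a b * X a a - (a == b)%:R * ((\sum_c A a c) * X b b)))); last first.
  by move=> b _; rewrite /fill_weight; ring.
by rewrite big_split /= sumrB -mulr_suml sum_nat_eq_mul subrr addr0.
Qed.

Lemma gammamap_decomposition A X (d : nat) : (forall a b, A b a = A a b) ->
  gammamap A (p * d)%:R X =
    \sum_a \sum_b (A a b / 8) *: edge_map a b X
  + \sum_a \sum_b fill_weight A d a b *: rank_one_map (delta_mx a 0) (delta_mx b 0) X.
Proof.
move=> symA; rewrite gammamap_dim_mulE sum_edge_maps // sum_rank_one_delta.
by rewrite -addrA -raddfD /= edge_fill_diag_const diag_const_mx addrC.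
Qed.

End Decomposition.

Section Adjacency.
Variables (C : numClosedFieldType) (p : nat) (A : 'M[C]_p).
Hypothesis adjA : adjacency_matrix A.

Lemma adjacency_sym a b : A b a = A a b.
Proof.
case: adjA => A01 /matrixP/(_ a b) + _; rewrite /adjmx !mxE => <-.
by case: (A01 b a) => ->; rewrite ?rmorph0 ?rmorph1.
Qed.

Lemma adjacency_ge0 a b : 0 <= A a b.
Proof. by case: adjA => A01 _ _; case: (A01 a b) => ->. Qed.

Lemma vdegreeE a : (vdegree A a)%:R = \sum_b A a b.
Proof.
case: adjA => A01 _ _.
rewrite /vdegree -sum1_card natr_sum big_mkcond /=; apply: eq_bigr => b _.
by rewrite inE; case: (A01 a b) => ->; rewrite ?eqxx // eq_sym oner_eq0.
Qed.

Lemma fill_weight_ge0 a b : 0 <= fill_weight A (maxdegree A) a b.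
Proof.
have deg_le : (vdegree A a <= maxdegree A)%N := leq_bigmax a.
case: adjA => A01 _ A0; rewrite /fill_weight -vdegreeE.
have [<-|ab] := eqVneq a b; first by rewrite A0 subr0 mul1r subr_ge0 ler_nat.
rewrite mul0r subr0; case: (A01 a b) => Aab; rewrite Aab ?subr0 ?ler0n // subr_ge0 ler1n.
by rewrite (leq_trans _ deg_le) // card_gt0; apply/set0Pn; exists b; rewrite inE Aab.
Qed.

End Adjacency.

Theorem mainTheorem10 (C : numClosedFieldType) (p : nat) (A : 'M[C]_p) :
  adjacency_matrix A ->
  entanglement_breaking (gammamap A (p * maxdegree A)%:R).
Proof.
move=> adjA.
apply: eb_ext (ebD (eb_sum _ _) (eb_sum _ _)) => [X | a | a].
- by rewrite gammamap_decomposition //; apply: adjacency_sym.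
- apply: eb_sum => b; apply: ebZ; last exact: eb_edge_map.
  by rewrite divr_ge0 ?adjacency_ge0.
- apply: eb_sum => b; apply: ebZ; last exact: eb_rank_one.
  exact: fill_weight_ge0.
Qed.
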